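(* Let $A=aH-\sum_{i=1}^{10}b_iE_i\in H_2(\mathbb{CP}^2\#10\overline{\mathbb{CP}^2};\mathbb Z)$ be a reduced class with $A\cdot A=-4$, $K_{st}\cdot A=2$ and $b_{10}=2$. Then $A=-a'(-3H+\sum_{i=1}^9E_i)-2E_{10}$ for some integer $a'\ge2$.
   Context: $\{H,E_1,\dots,E_{10}\}$ is the standard basis ($H^2=1$, $E_i^2=-1$, pairwise orthogonal), $K_{st}=-3H+\sum_{i=1}^{10}E_i$. A class $aH-\sum b_iE_i$ is reduced if $b_1\ge\cdots\ge b_{10}\ge0$ and $a\ge b_1+b_2+b_3$. *)

(* H_2(CP^2 # 10 (-CP^2); Z) = Z^11 with basis H, E_1..E_10.
   A class is (coefficient of H, coefficients of E_1..E_10), E_{i+1} <-> index i : 'I_10. *)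
From HB Require Import structures.
From mathcomp Require Import all_boot all_order all_algebra.
Set Implicit Arguments. Unset Strict Implicit. Unset Printing Implicit Defensive.
Import Order.TTheory GRing.Theory Num.Theory.
Local Open Scope ring_scope.

Definition cls := (int * {ffun 'I_10 -> int})%type.

Definition mkcls (a : int) (b : 'I_10 -> int) : cls := (a, [ffun i => - b i]).

Definition clsH : cls := (1, [ffun => 0]).
Definition clsE (j : 'I_10) : cls := (0, [ffun i => if i == j then 1 else 0]).

Definition cls_add (x y : cls) : cls := (x.1 + y.1, [ffun i => x.2 i + y.2 i]).
Definition cls_scale (k : int) (x : cls) : cls := (k * x.1, [ffun i => k * x.2 i]).

Definition dot (x y : cls) : int := x.1 * y.1 - \sum_(i < 10) x.2 i * y.2 i.

Definition Kst : cls := (-3, [ffun => 1]).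

Definition reduced (a : int) (b : 'I_10 -> int) : Prop :=
  (forall i j : 'I_10, (i <= j)%N -> b j <= b i) /\
  0 <= b (@ord_max 9) /\
  b (@ord0 9) + b (inord 1) + b (inord 2) <= a.

Definition K9 : cls := (-3, [ffun i : 'I_10 => if (i < 9)%N then 1 else 0]).

(* The conditions K.A = 2 and A.A = -4, together with b_10 = 2, say that the
   nine remaining coefficients satisfy sum b_i = 3a and sum b_i^2 = a^2.
   Hence sum (a - 3 b_i)^2 = 9a^2 - 6a.3a + 9a^2 = 0, so b_1 = ... = b_9 = a/3
   (equality in Cauchy-Schwarz), and a' := b_1 >= b_10 = 2 by reducedness. *)
From HB Require Import structures.
From mathcomp Require Import all_boot all_order all_algebra.
From mathcomp Require Import ring lra.
Import Order.TTheory GRing.Theory Num.Theory.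
Local Open Scope ring_scope.

Lemma const_of_sum_sqr_eq {R : realDomainType} {I : finType} (x : I -> R) (m a : R) :
  #|I|%:R = m ^+ 2 -> \sum_i x i = m * a -> \sum_i x i ^+ 2 = a ^+ 2 ->
  forall i, m * x i = a.
Proof.
move=> cardI sumx sumx2 i.
have sum_dev0 : \sum_i (a - m * x i) ^+ 2 = 0.
  under eq_bigr => j _ do rewrite sqrrB exprMn.
  rewrite big_split sumrB /= sumrMnl -!mulr_sumr sumr_const -mulr_natr cardI.
  by rewrite sumx sumx2; ring.
have /eqP : (a - m * x i) ^+ 2 = 0.
  by apply: (psumr_eq0P _ sum_dev0) => // j _; apply: sqr_ge0.
by rewrite sqrf_eq0 subr_eq0 => /eqP.
Qed.

Lemma dot_mkcls_mkcls (a : int) (b : 'I_10 -> int) :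
  dot (mkcls a b) (mkcls a b) = a ^+ 2 - \sum_(i < 10) b i ^+ 2.
Proof. by rewrite /dot /= -expr2; under eq_bigr => i _ do rewrite !ffunE mulrNN -expr2. Qed.

Lemma dot_Kst_mkcls (a : int) (b : 'I_10 -> int) :
  dot Kst (mkcls a b) = - (3 * a) + \sum_(i < 10) b i.
Proof.
rewrite /dot /= mulNr -sumrN; congr (_ + _).
by apply: eq_bigr => i _; rewrite !ffunE mul1r opprK.
Qed.

Lemma mkcls_K9_E10 (a' : int) (b : 'I_10 -> int) :
  (forall i : 'I_10, (i < 9)%N -> b i = a') -> b ord_max = 2 ->
  mkcls (3 * a') b = cls_add (cls_scale (- a') K9) (cls_scale (-2) (clsE ord_max)).
Proof.
move=> b_lt9 b_max; rewrite /mkcls /cls_add /cls_scale /K9 /clsE /=.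
congr pair; first by rewrite mulr0 addr0 mulrNN mulrC.
apply/ffunP => i; rewrite !ffunE.
case: (unliftP ord_max i) => [j ->|->]; last by rewrite b_max eqxx /= mulr0 mulr1 add0r.
have j_lt9 : (lift ord_max j < 9)%N by rewrite lift_max; apply: ltn_ord.
by rewrite b_lt9 // j_lt9 eq_sym (negbTE (neq_lift _ _)) mulr1 mulr0 addr0.
Qed.

Theorem lemma5p7 (a : int) (b : 'I_10 -> int) :
  reduced a b ->
  dot (mkcls a b) (mkcls a b) = -4 ->
  dot Kst (mkcls a b) = 2 ->
  b (@ord_max 9) = 2 ->
  exists a' : int, 2 <= a' /\
    mkcls a b = cls_add (cls_scale (- a') K9) (cls_scale (-2) (clsE (@ord_max 9))).
Proof.
move=> [b_decr _] sq_eq K_eq b_max.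
rewrite dot_mkcls_mkcls big_ord_recr /= b_max in sq_eq.
rewrite dot_Kst_mkcls big_ord_recr /= b_max in K_eq.
pose x (j : 'I_9) := b (widen_ord (leqnSn 9) j).
have sum_x : \sum_(j < 9) x j = 3 * a by rewrite /x; lra.
have sum_x2 : \sum_(j < 9) x j ^+ 2 = a ^+ 2 by rewrite /x; lra.
have x_const : forall j, 3 * x j = a.
  by apply: (const_of_sum_sqr_eq x 3 a _ sum_x sum_x2); rewrite card_ord.
have a_eq : a = 3 * x ord0 by rewrite x_const.
exists (x ord0); split; first by rewrite -b_max; apply: b_decr.
rewrite a_eq; apply: mkcls_K9_E10 => // i i_lt9.
have -> : i = widen_ord (leqnSn 9) (Ordinal i_lt9) by apply: val_inj.
by apply: (mulfI (x := 3)); rewrite // !x_const.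
Qed.
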